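(* Let $M$ be a right $R$-module and consider: (i) $M$ is $M$-coherent; (ii) the intersection of any two finitely $M$-generated submodules of $M$ is finitely $M$-generated, and $\ker\varphi$ is finitely $M$-generated for every $\varphi\in\mathrm{End}_R(M)$. Then (i)$\Rightarrow$(ii). If moreover $M$ is intrinsically projective, then (i) and (ii) are equivalent.
   Context: $M^{(n)}$ denotes the direct sum of $n$ copies of $M$. A module $N$ is finitely $M$-generated if there is an epimorphism $M^{(n)}\to N$ for some $n>0$. A finitely $M$-generated module $N$ is $M$-coherent if for every $n>0$ and every homomorphism $\rho:M^{(n)}\to N$, $\ker\rho$ is finitely $M$-generated. $M$ is intrinsically projective if for every integer $n>0$, every submodule $N\le M$, every epimorphism $\alpha:M^{(n)}\to N$ and every homomorphism $\beta:M\to N$, there exists $\gamma:M\to M^{(n)}$ with $\alpha\gamma=\beta$. *)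

From HB Require Import structures.
From mathcomp Require Import all_boot all_order all_algebra.
Set Implicit Arguments. Unset Strict Implicit. Unset Printing Implicit Defensive.
Import GRing.Theory.
Local Open Scope ring_scope.

(* Right R-modules are represented as left modules over the converse ring R^c:
   for M : lmodType R^c, the scalar action  a *: m  is the right action  m a. *)

Notation dsum M n := {ffun 'I_n -> M}.

Section ModDefs.
Variable R : pzRingType.
Variable M : lmodType R.

Definition is_submodule (V : lmodType R) (S : V -> Prop) : Prop :=
  S 0 /\ (forall x y, S x -> S y -> S (x + y)) /\ (forall a x, S x -> S (a *: x)).

Definition fin_M_gen (V : lmodType R) (S : V -> Prop) : Prop :=
  exists n : nat, (0 < n)%N /\
    exists f : {linear dsum M n -> V},
      forall v, S v <-> exists x, f x = v.

Definition ker (U V : lmodType R) (f : U -> V) : U -> Prop := fun x => f x = 0.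

(* M is M-coherent (M is trivially finitely M-generated; N = M here) *)
Definition M_coherent_self : Prop :=
  fin_M_gen (fun _ : M => True) /\
  forall (n : nat), (0 < n)%N -> forall rho : {linear dsum M n -> M},
    fin_M_gen (ker rho).

Definition cond_ii : Prop :=
  (forall A B : M -> Prop, is_submodule A -> is_submodule B ->
     fin_M_gen A -> fin_M_gen B -> fin_M_gen (fun x => A x /\ B x)) /\
  (forall phi : {linear M -> M}, fin_M_gen (ker phi)).

Definition intrinsically_projective : Prop :=
  forall (n : nat), (0 < n)%N -> forall N : M -> Prop, is_submodule N ->
  forall alpha : {linear dsum M n -> M}, (forall v, N v <-> exists x, alpha x = v) ->
  forall beta : {linear M -> M}, (forall m, N (beta m)) ->
  exists gamma : {linear M -> dsum M n}, forall m, alpha (gamma m) = beta m.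
End ModDefs.

(* We work with the slightly more flexible notion [Gen S]: S is the image of
   some M^(n), n = 0 allowed; padding with a spare copy of M shows that it is
   equivalent to [fin_M_gen].  The pivot of the proof is [kernels_Gen]: every linear map
   M^(n) -> M has a Gen kernel.  It is equivalent to (i), and it implies (ii):
   Im a /\ Im b is the image of the kernel of [a, -b] : (x, y) |-> a x - b y,
   and ker phi is the image of ker (phi \o ev0) under ev0 : M^(1) -> M.
   Conversely, intrinsic projectivity lets us lift maps out of M^(k) along any
   alpha : M^(n) -> M whose image contains theirs; with such lifts Gf, Gg of a
   generator c of Im f /\ Im g, the kernel of [f, g] is
   (ker f, 0) + (0, ker g) + {(Gf w, - Gg w)}.  Splitting M^(1+n) this way,
   induction on n gives [kernels_Gen] from (ii). *)

From HB Require Import structures.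
From mathcomp Require Import all_boot all_order all_algebra.
From Stdlib Require Import ClassicalEpsilon.
Set Implicit Arguments. Unset Strict Implicit. Unset Printing Implicit Defensive.
Import GRing.Theory.
Local Open Scope ring_scope.

Section FinitelyGenerated.
Variable R : pzRingType.
Variable M : lmodType R.

Definition mkLin (U V : lmodType R) (f : U -> V) (fL : linear f) : {linear U -> V} :=
  HB.pack f (GRing.isLinear.Build R U V *:%R f fL).

Definition lpart m n (x : dsum M (m + n)) : dsum M m := [ffun i => x (lshift n i)].
Definition rpart m n (x : dsum M (m + n)) : dsum M n := [ffun j => x (rshift m j)].
Definition catf m n (x : dsum M m) (y : dsum M n) : dsum M (m + n) :=
  [ffun k => match split k with inl i => x i | inr j => y j end].

Lemma lpart_cat m n x y : lpart (@catf m n x y) = x.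
Proof. by apply/ffunP=> i; rewrite !ffunE (unsplitK (inl i)). Qed.

Lemma rpart_cat m n x y : rpart (@catf m n x y) = y.
Proof. by apply/ffunP=> j; rewrite !ffunE (unsplitK (inr j)). Qed.

Lemma cat_parts m n (z : dsum M (m + n)) : catf (lpart z) (rpart z) = z.
Proof.
apply/ffunP=> k; rewrite !ffunE.
by case: splitP => i ki; rewrite ffunE; congr (z _); apply: val_inj.
Qed.

Lemma catfP m n a (x1 x2 : dsum M m) (y1 y2 : dsum M n) :
  catf (a *: x1 + x2) (a *: y1 + y2) = a *: catf x1 y1 + catf x2 y2.
Proof. by apply/ffunP=> k; rewrite !ffunE; case: split => i; rewrite !ffunE. Qed.

Lemma catfD m n (x1 x2 : dsum M m) (y1 y2 : dsum M n) :
  catf x1 y1 + catf x2 y2 = catf (x1 + x2) (y1 + y2).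
Proof. by rewrite -[catf x1 y1]scale1r -catfP !scale1r. Qed.

Lemma catf_split m n (x : dsum M m) (y : dsum M n) : catf x y = catf x 0 + catf 0 y.
Proof. by rewrite catfD addr0 add0r. Qed.

Lemma lpart_lin m n : linear (@lpart m n).
Proof. by move=> a u v; apply/ffunP=> i; rewrite !ffunE. Qed.

Lemma rpart_lin m n : linear (@rpart m n).
Proof. by move=> a u v; apply/ffunP=> j; rewrite !ffunE. Qed.

Lemma inl_lin m n : linear (fun x : dsum M m => catf x (0 : dsum M n)).
Proof. by move=> a u v; rewrite -catfP scaler0 addr0. Qed.

Lemma inr_lin m n : linear (fun y : dsum M n => catf (0 : dsum M m) y).
Proof. by move=> a u v; rewrite -catfP scaler0 addr0. Qed.

Definition lpartL m n := mkLin (@lpart_lin m n).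
Definition inlL m n := mkLin (@inl_lin m n).
Definition inrL m n := mkLin (@inr_lin m n).

Definition ev0 (x : dsum M 1) : M := x ord0.
Definition diag (m : M) : dsum M 1 := [ffun => m].

Lemma ev0_lin : linear ev0.
Proof. by move=> a u v; rewrite /ev0 !ffunE. Qed.

Lemma diag_lin : linear diag.
Proof. by move=> a u v; apply/ffunP=> i; rewrite !ffunE. Qed.

Definition ev0L := mkLin ev0_lin.
Definition diagL := mkLin diag_lin.

Lemma ev0K (m : M) : ev0 (diag m) = m.
Proof. by rewrite /ev0 ffunE. Qed.

Lemma diagK (x : dsum M 1) : diag (ev0 x) = x.
Proof. by apply/ffunP=> i; rewrite ffunE ord1. Qed.

Definition single k (i : 'I_k) (m : M) : dsum M k := [ffun j => if j == i then m else 0].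

Lemma single_lin k i : linear (@single k i).
Proof.
by move=> a u v; apply/ffunP=> j; rewrite !ffunE; case: (j == i); rewrite ?scaler0 ?addr0.
Qed.

Definition singleL k i := mkLin (@single_lin k i).

Lemma sum_single k (w : dsum M k) : w = \sum_i single i (w i).
Proof.
apply/ffunP=> j; rewrite sum_ffunE (bigD1 j) //= ffunE eqxx big1 ?addr0 //.
by move=> i ne_ij; rewrite ffunE eq_sym (negbTE ne_ij).
Qed.

Definition Gen (V : lmodType R) (S : V -> Prop) : Prop :=
  exists n (f : {linear dsum M n -> V}), forall v, S v <-> exists x, f x = v.

Lemma image_padded n (V : lmodType R) (f : {linear dsum M n -> V}) v :
  (exists x, f x = v) <-> exists y : dsum M (n + 1), f (lpart y) = v.
Proof.
split=> [[x <-]|[y <-]]; last by exists (lpart y).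
by exists (catf x 0); rewrite lpart_cat.
Qed.

Lemma Gen_fin_M_gen (V : lmodType R) (S : V -> Prop) : Gen S <-> fin_M_gen M S.
Proof.
split=> [[n [f fS]]|[n [_ [f fS]]]]; last by exists n, f.
exists (n + 1)%N; split; first by rewrite addn1.
by exists (f \o lpartL n 1) => v; rewrite fS image_padded.
Qed.

Lemma Gen_ext (V : lmodType R) (S T : V -> Prop) :
  Gen S -> (forall v, S v <-> T v) -> Gen T.
Proof. by case=> n [f fS] ST; exists n, f => v; rewrite -ST. Qed.

Lemma Gen_im n (V : lmodType R) (f : {linear dsum M n -> V}) :
  Gen (fun v => exists x, f x = v).
Proof. by exists n, f. Qed.

Lemma Gen_all n : Gen (fun _ : dsum M n => True).
Proof. by apply: Gen_ext (Gen_im idfun) _ => v; split=> // _; exists v. Qed.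

Lemma Gen_img (V W : lmodType R) (S : V -> Prop) (g : {linear V -> W}) :
  Gen S -> Gen (fun w => exists v, S v /\ g v = w).
Proof.
case=> n [f fS]; exists n, (g \o f) => w /=.
split=> [[v [/fS [x <-] <-]]|[x <-]]; first by exists x.
by exists (f x); split=> //; apply/fS; exists x.
Qed.

Lemma pair_lin n m (V : lmodType R) (f : {linear dsum M n -> V})
    (g : {linear dsum M m -> V}) :
  linear (fun z => f (lpart z) + g (rpart z)).
Proof.
move=> a u v /=; rewrite (lpart_lin a u v) (rpart_lin a u v) !linearP.
by rewrite scalerDr addrACA.
Qed.

Definition pairL n m (V : lmodType R) (f : {linear dsum M n -> V})
    (g : {linear dsum M m -> V}) := mkLin (pair_lin f g).

Lemma pairE n m (V : lmodType R) (f : {linear dsum M n -> V})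
    (g : {linear dsum M m -> V}) x y :
  pairL f g (catf x y) = f x + g y.
Proof. by rewrite /= lpart_cat rpart_cat. Qed.

Lemma Gen_add (V : lmodType R) (S1 S2 : V -> Prop) : Gen S1 -> Gen S2 ->
  Gen (fun v => exists a b, S1 a /\ S2 b /\ v = a + b).
Proof.
case=> n [f fS] [m [g gS]]; exists (n + m)%N, (pairL f g) => v.
split=> [[a [b [/fS [x <-] [/gS [y <-] ->]]]]|[z <-]].
  by exists (catf x y); rewrite pairE.
exists (f (lpart z)), (g (rpart z)).
split; first by apply/fS; exists (lpart z).
by split=> //; apply/gS; exists (rpart z).
Qed.

Lemma Gen_ker_surj (U V W : lmodType R) (f : {linear V -> W}) (g : {linear U -> V}) :
  (forall v, exists u, g u = v) -> Gen (ker (f \o g)) -> Gen (ker f).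
Proof.
move=> g_surj /(Gen_img g) Kfg; apply: Gen_ext Kfg _ => v.
split=> [[u [Ku <-]] //|Kv]; have [u gu] := g_surj v.
by exists u; rewrite /ker /= gu.
Qed.

(* On M^(0) = 0 every map has the whole space as kernel. *)
Lemma Gen_ker0 (V : lmodType R) (rho : {linear dsum M 0 -> V}) : Gen (ker rho).
Proof.
apply: Gen_ext (Gen_all 0) _ => x; split=> // _.
have -> : x = 0 by apply/ffunP=> -[].
by rewrite /ker linear0.
Qed.

Definition kernels_Gen : Prop :=
  forall n (rho : {linear dsum M n -> M}), Gen (ker rho).

Lemma coherent_kernels_Gen : M_coherent_self M -> kernels_Gen.
Proof.
by case=> _ coh [|n] rho; [exact: Gen_ker0 | apply/Gen_fin_M_gen; exact: coh].
Qed.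

Lemma kernels_Gen_coherent : kernels_Gen -> M_coherent_self M.
Proof.
move=> kerG; split=> [|n _ rho]; last by apply/Gen_fin_M_gen.
apply/Gen_fin_M_gen; apply: Gen_ext (Gen_im ev0L) _ => v.
by split=> // _; exists (diag v); rewrite /= ev0K.
Qed.

(* An intersection of Gen sets Im a /\ Im b is the image under a of the
   first components of ker [a, -b]. *)
Lemma Gen_cap (A B : M -> Prop) : kernels_Gen -> Gen A -> Gen B ->
  Gen (fun x => A x /\ B x).
Proof.
move=> kerG [n [a aA]] [m [b bB]].
apply: Gen_ext (Gen_img (a \o lpartL n m) (kerG _ (pairL a (-%R \o b)))) _ => v.
split=> [[z [/subr0_eq ab <-]]|[/aA [x <-] /bB [y ab]]].
  by split; [apply/aA; exists (lpart z) | apply/bB; exists (rpart z)].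
by exists (catf x y); rewrite /ker pairE /= lpart_cat ab subrr.
Qed.

Lemma kernels_Gen_cond_ii : kernels_Gen -> cond_ii M.
Proof.
move=> kerG; split=> [A B _ _ /Gen_fin_M_gen GA /Gen_fin_M_gen GB|phi].
  by apply/Gen_fin_M_gen; exact: Gen_cap.
apply/Gen_fin_M_gen; apply: (@Gen_ker_surj _ _ _ phi ev0L) (kerG _ _).
by move=> m; exists (diag m); rewrite /= ev0K.
Qed.

Lemma image_submodule (U V : lmodType R) (f : {linear U -> V}) :
  is_submodule (fun v => exists u, f u = v).
Proof.
split; first by exists 0; rewrite linear0.
split=> [x y [u <-] [u' <-]|a x [u <-]]; first by exists (u + u'); rewrite linearD.
by exists (a *: u); rewrite linearZ.
Qed.

Section IntrinsicallyProjective.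
Hypothesis IP : intrinsically_projective M.

Lemma IP_lift_endo n (alpha : {linear dsum M n -> M}) (beta : {linear M -> M}) :
  (forall m, exists x, alpha x = beta m) ->
  exists gamma : {linear M -> dsum M n}, forall m, alpha (gamma m) = beta m.
Proof.
move=> im_beta; have n1_gt0 : (0 < n + 1)%N by rewrite addn1.
have im_padded v : (exists x, alpha x = v) <-> exists y, (alpha \o lpartL n 1) y = v.
  exact: image_padded.
have [gamma alpha_gamma] := IP n1_gt0 (image_submodule alpha) im_padded im_beta.
by exists (lpartL n 1 \o gamma).
Qed.

(* Lifting a map out of M^(k): lift each coordinate and add up the lifts. *)
Lemma IP_lift n k (alpha : {linear dsum M n -> M}) (c : {linear dsum M k -> M}) :
  (forall w, exists x, alpha x = c w) ->
  exists G : {linear dsum M k -> dsum M n}, forall w, alpha (G w) = c w.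
Proof.
move=> im_c.
have lifts (i : 'I_k) : {gamma : {linear M -> dsum M n} |
    forall m, alpha (gamma m) = (c \o singleL i) m}.
  apply: constructive_indefinite_description.
  by apply: (@IP_lift_endo _ alpha (c \o singleL i)) => m; exact: im_c.
pose G (w : dsum M k) := \sum_i proj1_sig (lifts i) (w i).
have GL : linear G.
  move=> a u v; rewrite /G scaler_sumr -big_split /=; apply: eq_bigr => i _.
  by rewrite !ffunE linearP.
exists (mkLin GL) => w /=; rewrite /G linear_sum [in RHS](sum_single w) linear_sum.
by apply: eq_bigr => i _; exact: (proj2_sig (lifts i)).
Qed.

(* The kernel of the pairing [f, g] : M^(m+n) -> M of two maps with Gen kernels
   and a Gen intersection of images Im f /\ Im g = c(M^(k)): if Gf, Gg lift c
   along f and g, then ker [f, g] = (ker f, 0) + (0, ker g) + {(Gf w, - Gg w)}. *)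
Lemma Gen_ker_pair m n (f : {linear dsum M m -> M}) (g : {linear dsum M n -> M}) :
  Gen (fun v => (exists x, f x = v) /\ (exists y, g y = v)) ->
  Gen (ker f) -> Gen (ker g) -> Gen (ker (pairL f g)).
Proof.
move=> [k [c c_cap]] Kf Kg.
have c_f w : exists x, f x = c w by case: (proj2 (c_cap (c w)) (ex_intro _ w erefl)).
have c_g w : exists y, g y = c w by case: (proj2 (c_cap (c w)) (ex_intro _ w erefl)).
have [Gf fGf] := IP_lift c_f; have [Gg gGg] := IP_lift c_g.
have antidiag_lin : linear (fun w => catf (Gf w) (- Gg w)).
  by move=> r u v /=; rewrite linearP (linearP Gg) opprD -scalerN catfP.
apply: Gen_ext (Gen_add (Gen_add (Gen_img (inlL m n) Kf) (Gen_img (inrL m n) Kg))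
                        (Gen_img (mkLin antidiag_lin) (Gen_all k))) _ => z; split.
  case=> _ [_ [[_ [_ [[x [Kx <-]] [[y [Ky <-]] ->]]]] [[w [_ <-]] ->]]].
  rewrite /ker !linearD /= !lpart_cat !rpart_cat; move: Kx Ky; rewrite /ker => -> ->.
  by rewrite !linear0 linearN fGf gGg !addr0 !add0r subrr.
rewrite /ker -[z]cat_parts pairE; set x := lpart z; set y := rpart z => fxgy.
have [w cw] : exists w, c w = f x.
  apply/c_cap; split; first by exists x.
  by exists (- y); rewrite linearN; apply/eqP; rewrite eq_sym -addr_eq0 fxgy.
exists (catf (x - Gf w) 0 + catf 0 (y + Gg w)), (catf (Gf w) (- Gg w)); split.
  exists (catf (x - Gf w) 0), (catf 0 (y + Gg w)); split.
    by exists (x - Gf w); split=> //; rewrite /ker linearB fGf cw subrr.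
  split=> //; exists (y + Gg w); split=> //.
  by rewrite /ker linearD gGg cw addrC.
split; first by exists w.
by rewrite -catf_split catfD subrK addrK.
Qed.

End IntrinsicallyProjective.

(* Under intrinsic projectivity, (ii) gives Gen kernels by induction on the
   number of copies, splitting M^(n+1) = M^(1) (+) M^(n). *)
Lemma cond_ii_kernels_Gen : intrinsically_projective M -> cond_ii M -> kernels_Gen.
Proof.
move=> IP [cap_ii ker_ii]; elim=> [|n IHn] rho; first exact: Gen_ker0.
set f := rho \o inlL 1 n; set g := rho \o inrL 1 n.
have Kf : Gen (ker f).
  apply: (@Gen_ker_surj _ _ _ _ diagL); first by move=> x; exists (ev0 x); rewrite /= diagK.
  exact/Gen_fin_M_gen/ker_ii.
have cap_fg : Gen (fun v => (exists x, f x = v) /\ (exists y, g y = v)).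
  apply/Gen_fin_M_gen; apply: cap_ii; try exact: image_submodule.
    by apply/Gen_fin_M_gen; exact: Gen_im.
  by apply/Gen_fin_M_gen; exact: Gen_im.
apply: Gen_ext (Gen_ker_pair IP cap_fg Kf (IHn g)) _ => z.
have rhoE : rho z = pairL f g z.
  by rewrite /= -[in LHS](cat_parts z) catf_split linearD.
by rewrite /ker rhoE.
Qed.

End FinitelyGenerated.

Theorem mainTheorem13 (R : pzRingType) (M : lmodType R^c) :
  (M_coherent_self M -> cond_ii M) /\
  (intrinsically_projective M -> (M_coherent_self M <-> cond_ii M)).
Proof.
have i_ii : M_coherent_self M -> cond_ii M.
  by move=> /coherent_kernels_Gen; exact: kernels_Gen_cond_ii.
split=> // IP; split=> // /(cond_ii_kernels_Gen IP).
exact: kernels_Gen_coherent.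
Qed.
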